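(* Let $(A,B)$ be a Katsura pair such that $A$ has no zero rows. If the associated action-restriction pair $(\mathbb{Z}\times E_A^0,E_A)$ is contracting, then it is regular.
   Context: Katsura pair: $N\in\mathbb{N}$, $A\in M_N(\mathbb{N})$ (nonnegative integers), $B\in M_N(\mathbb{Z})$ with $A_{ij}=0\Rightarrow B_{ij}=0$. Graph $E_A$: vertices $\{1,\dots,N\}$, edges $e_{i,j,m}$ ($0\le m<A_{ij}$), $r=i$, $s=j$. The action-restriction pair $(\mathbb{Z}\times E_A^0,E_A)$: the group bundle with elements $a_i^k$ ($a_i^ka_i^l=a_i^{k+l}$, unit $a_i^0$) acts by $a_i^k\cdot e_{i,j,m}=e_{i,j,\hat m}$, $a_i^k|_{e_{i,j,m}}=a_j^{\hat k}$ where $kB_{ij}+m=\hat kA_{ij}+\hat m$, $0\le\hat m<A_{ij}$, extended to finite paths by $g\cdot(e\nu)=(g\cdot e)(g|_e\cdot\nu)$, $g|_{e\nu}=(g|_e)|_\nu$ (the action need not be faithful). Contracting: there is a finite $F$ such that for every $g$ there is $n$ with $g|_\mu\in F$ for all paths $\mu$ of length $\ge n$ with range $d(g)$. Regular: for every $g$ there is $K$ such that $g\cdot\mu=\mu$ and $|\mu|\ge K$ imply $g|_\mu=a^0_{s(\mu)}$. *)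

From mathcomp Require Import all_boot all_order all_algebra.
Set Implicit Arguments. Unset Strict Implicit. Unset Printing Implicit Defensive.
Import Order.TTheory GRing.Theory Num.Theory.
Local Open Scope ring_scope.

Section Katsura.
Variable N : nat.
Variable A : 'M[nat]_N.
Variable B : 'M[int]_N.

Definition katsura_pair : Prop := forall i j, A i j = 0%N -> B i j = 0.

Definition no_zero_rows : Prop := forall i, exists j, A i j != 0%N.

(* An edge e_{i,j,m} of E_A is encoded as the triple (i, j, m) with m < A_ij;
   r(e) = i, s(e) = j. *)
Definition edge := ('I_N * 'I_N * nat)%type.
Definition e_r (e : edge) : 'I_N := e.1.1.
Definition e_s (e : edge) : 'I_N := e.1.2.
Definition e_m (e : edge) : nat := e.2.
Definition valid_edge (e : edge) : bool := (e_m e < A (e_r e) (e_s e))%N.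

(* Finite paths e_1 e_2 ... e_n with range i: r(e_1) = i and s(e_k) = r(e_{k+1}).
   The empty sequence is the vertex (length-0 path) i. *)
Fixpoint is_path (i : 'I_N) (p : seq edge) : bool :=
  match p with
  | [::] => true
  | e :: p' => [&& e_r e == i, valid_edge e & is_path (e_s e) p']
  end.

Definition p_s (i : 'I_N) (p : seq edge) : 'I_N := last i (map e_s p).

(* The group-bundle element a_i^k is encoded as the pair (k, i); d(a_i^k) = i. *)
Definition gelt := (int * 'I_N)%type.

(* a_i^k . e_{i,j,m} = e_{i,j,mh},  a_i^k|_{e_{i,j,m}} = a_j^{kh},
   where k B_ij + m = kh A_ij + mh, 0 <= mh < A_ij. *)
Definition act_edge (k : int) (e : edge) : edge * int :=
  let x := k * B (e_r e) (e_s e) + (e_m e)%:Z in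
  let a := (A (e_r e) (e_s e))%:Z in
  ((e_r e, e_s e, `|(x %% a)%Z|%N), (x %/ a)%Z).

(* g.(e nu) = (g.e)(g|_e . nu),  g|_{e nu} = (g|_e)|_nu; returns the pair
   (g . p, exponent of g|_p). *)
Fixpoint act_path (k : int) (p : seq edge) : seq edge * int :=
  match p with
  | [::] => ([::], k)
  | e :: p' => let ek := act_edge k e in
               let pk := act_path ek.2 p' in
               (ek.1 :: pk.1, pk.2)
  end.

Definition act (g : gelt) (p : seq edge) : seq edge := (act_path g.1 p).1.
Definition restr (g : gelt) (p : seq edge) : gelt :=
  ((act_path g.1 p).2, p_s g.2 p).

Definition contracting : Prop :=
  exists F : seq gelt, forall g : gelt, exists n : nat,
    forall p : seq edge, is_path g.2 p -> (n <= size p)%N -> restr g p \in F.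

Definition regular : Prop :=
  forall g : gelt, exists K : nat,
    forall p : seq edge, is_path g.2 p -> act g p = p -> (K <= size p)%N ->
      restr g p = (0, p_s g.2 p).

End Katsura.

From mathcomp Require Import all_boot all_order all_algebra.
From mathcomp Require Import zify.
Import Order.TTheory GRing.Theory Num.Theory.
Local Open Scope ring_scope.

(* If a_i^k fixes a path p, then so does every power a_i^(c k), and the
   restriction exponent scales linearly: (a_i^(c k))|_p = a^(c k'), where
   a^k' = a_i^k|_p.  Contraction confines all restrictions to long paths to a
   finite set F; taking c larger than every exponent occurring in F forces
   |c k'| <= max |F| < c, hence k' = 0. *)

Section Scaling.
Variables (N : nat) (A : 'M[nat]_N) (B : 'M[int]_N).

(* a_i^k fixes e_{i,j,m} exactly when A_ij divides k B_ij, which survives scaling k. *)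
Lemma act_edge_scale (c : int) {k : int} {e : edge N} :
  valid_edge A e -> (act_edge A B k e).1 = e ->
  act_edge A B (c * k) e = (e, c * (act_edge A B k e).2).
Proof.
case: e => [[r s] m]; rewrite /valid_edge /act_edge /e_r /e_s /e_m /= => m_lt [m_fix].
set a := (A r s)%:Z; set x := k * B r s + m%:Z.
have a_neq0 : a != 0 by rewrite /a eqz_nat -lt0n (leq_ltn_trans _ m_lt).
have m_bounds : 0 <= m%:Z < a by rewrite /a ltz_nat m_lt.
have x_mod : (x %% a)%Z = m%:Z by rewrite -m_fix gez0_abs // modz_ge0.
have kB_eq : k * B r s = (x %/ a)%Z * a.
  by have := divz_eq x a; rewrite x_mod {1}/x => /addIr.
have -> : c * k * B r s + m%:Z = c * (x %/ a)%Z * a + m%:Z.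
  by rewrite -mulrA kB_eq mulrA.
by rewrite divzMDl // (divz_small (m := m%:Z)) ?gez0_abs // addr0 modzMDl modz_small.
Qed.

Lemma act_path_cons (k : int) (e : edge N) (p : seq (edge N)) :
  act_path A B k (e :: p) =
  ((act_edge A B k e).1 :: (act_path A B (act_edge A B k e).2 p).1,
   (act_path A B (act_edge A B k e).2 p).2).
Proof. by []. Qed.

Lemma act_path_scale (c : int) {p : seq (edge N)} {i : 'I_N} {k : int} :
  is_path A i p -> (act_path A B k p).1 = p ->
  act_path A B (c * k) p = (p, c * (act_path A B k p).2).
Proof.
elim: p i k => [|e p IHp] i k //.
rewrite !act_path_cons => /and3P [_ e_valid p_path] [e_fix p_fix].
by rewrite (act_edge_scale c e_valid e_fix) (IHp (e_s e)).
Qed.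

Lemma restr_fixed_scale (c : int) (g : gelt N) (p : seq (edge N)) :
  is_path A g.2 p -> act A B g p = p ->
  restr A B (c * g.1, g.2) p = (c * (restr A B g p).1, p_s g.2 p).
Proof. by move=> p_path p_fix; rewrite /restr /= (act_path_scale c p_path p_fix). Qed.

Lemma contracting_restr_bounded :
  contracting A B -> exists M : nat, forall g : gelt N, exists n : nat,
    forall p, is_path A g.2 p -> (n <= size p)%N -> (`|(restr A B g p).1| <= M)%N.
Proof.
move=> [F F_contr]; exists (\max_(f <- F) `|f.1|%N) => g.
have [n n_contr] := F_contr g; exists n => p p_path p_long.
exact: (@leq_bigmax_seq _ F xpredT (fun f : gelt N => `|f.1|%N) _ (n_contr p p_path p_long) isT).
Qed.

End Scaling.

Lemma absz_mulSn_le_eq0 (M : nat) (x : int) : (`|(M.+1%:Z * x)%R| <= M)%N -> x = 0.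
Proof.
rewrite abszM absz_nat => Mx_le; apply/eqP; rewrite -absz_eq0.
by move: Mx_le; case: `|x|%N => // q; nia.
Qed.

Theorem proposition3p6 (N : nat) (A : 'M[nat]_N) (B : 'M[int]_N) :
  katsura_pair A B -> no_zero_rows A -> contracting A B -> regular A B.
Proof.
move=> _ _ /contracting_restr_bounded [M restr_bounded] g.
have [n n_bounded] := restr_bounded (M.+1%:Z * g.1, g.2).
exists n => p p_path p_fix p_long.
have := n_bounded p p_path p_long.
rewrite (@restr_fixed_scale N A B M.+1%:Z _ _ p_path p_fix) /= => /absz_mulSn_le_eq0 k'_eq0.
by rewrite /restr -k'_eq0.
Qed.
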